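(* Let $U_1,\dots,U_{d-1}$ be iid uniform on $[0,1]$ and $q\ge1$. Then for every interval $[a,b]$ with $0\le a\le b$, $$\mathbf{P}\Big[\sum_{i=1}^{d-1}U_i^q\in[a,b]\Big]\le b^{(d-1)/q}-a^{(d-1)/q}.$$ *)

From HB Require Import structures.
From mathcomp Require Import all_boot all_order all_algebra.
From mathcomp Require Import all_classical all_reals all_analysis.
Set Implicit Arguments. Unset Strict Implicit. Unset Printing Implicit Defensive.
Import Order.TTheory GRing.Theory Num.Theory.
Local Open Scope classical_set_scope.
Local Open Scope ring_scope.

Definition uniform01 (d : measure_display) (T : measurableType d)
  (R : realType) (P : probability T R) (X : {RV P >-> R}) : Prop :=
  forall A : set R, measurable A ->
    P (X @^-1` A) = uniform_prob (@ltr01 R) A.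

Definition mutually_independent (d : measure_display) (T : measurableType d)
  (R : realType) (P : probability T R) (n : nat) (X : 'I_n -> {RV P >-> R}) : Prop :=
  forall (J : {set 'I_n}) (A : 'I_n -> set R),
    (forall i, measurable (A i)) ->
    P (\bigcap_(i in [set j | j \in J]) (X i @^-1` A i)) =
    (\prod_(i in J) P (X i @^-1` A i))%E.

(* Let S be the power sum, r = n/q and s = (a/b)^(1/q) <= 1, so that s^n b^r = a^r.
   The event {S <= b} forces every U_i <= b^(1/q), hence P[S <= b] <= b^r.
   Since S is q-homogeneous, scaling by s maps {S <= b} into {S <= a}, which
   suggests P[S < a] >= s^n P[S <= b]; then
   P[a <= S <= b] = P[S <= b] - P[S < a] <= (1 - s^n) b^r = b^r - a^r.
   The sample space being abstract, the scaling is carried out on a grid of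
   mesh 1/N: by independence a grid box has probability equal to its volume,
   {S <= b} is covered by grid boxes up to an event of probability n/N, and
   the images of these boxes under scaling by s are disjoint boxes inside
   {S < a}. Letting N grow gives the bound. *)

From HB Require Import structures.
From mathcomp Require Import all_boot all_order all_algebra.
From mathcomp Require Import all_classical all_reals all_analysis.
From mathcomp Require Import lra measurable_realfun.
Import Order.TTheory GRing.Theory Num.Theory.
Local Open Scope classical_set_scope.
Local Open Scope ring_scope.
Set Implicit Arguments. Unset Strict Implicit. Unset Printing Implicit Defensive.

Section uniform01_lebesgue.
Variable R : realType.
Local Notation unif := (uniform_prob (@ltr01 R)).
Local Notation leb := (@lebesgue_measure R).

Lemma uniform01_probE (A : set R) : measurable A -> unif A = leb (A `&` `[0, 1]).
Proof.
move=> mA; rewrite /uniform_prob integral_uniform_pdf.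
rewrite (eq_integral (fun=> 1%:E)); last first.
  move=> x; rewrite inE => -[_]; rewrite /= in_itv/= /uniform_pdf => ->.
  by rewrite subr0 invr1.
by rewrite integral_cst ?mul1e//; exact: measurableI.
Qed.

Lemma uniform01_prob_le (A B : set R) : measurable A -> measurable B ->
  A `&` `[0, 1] `<=` B -> (unif A <= leb B)%E.
Proof.
move=> mA mB AB; rewrite uniform01_probE//; apply: le_measure => //.
  by rewrite inE; exact: measurableI.
by rewrite inE.
Qed.

Lemma uniform01_prob_sub01 (A : set R) :
  measurable A -> A `<=` `[0, 1] -> unif A = leb A.
Proof. by move=> mA A01; rewrite uniform01_probE// setIidl. Qed.

Lemma lebesgue_measure_itv_co (x y : R) : x <= y -> leb `[x, y[ = (y - x)%:E.
Proof.
move=> xy; rewrite lebesgue_measure_itv/= lte_fin; case: ltgtP xy => //.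
by move=> -> _; rewrite subrr.
Qed.

Lemma lebesgue_measure_itv_cc (x y : R) : x <= y -> leb `[x, y] = (y - x)%:E.
Proof.
move=> xy; rewrite lebesgue_measure_itv/= lte_fin; case: ltgtP xy => //.
by move=> -> _; rewrite subrr.
Qed.

End uniform01_lebesgue.

Section finite_unions.
Variables (d : measure_display) (T : ringOfSetsType d) (R : realFieldType)
  (mu : {content set T -> \bar R}).

Lemma measure_bigsetU_le (I : Type) (s : seq I) (p : pred I) (E : I -> set T) :
  (forall i, measurable (E i)) ->
  (mu (\big[setU/set0]_(i <- s | p i) E i) <= \sum_(i <- s | p i) mu (E i))%E.
Proof.
move=> mE; elim: s => [|i s IH]; first by rewrite !big_nil measure0.
rewrite !big_cons; case: (p i) => //.
apply: le_trans (measureU2 _ _ _) _ => //; first exact: bigsetU_measurable.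
exact: leeD.
Qed.

Lemma measure_bigsetU_uniq (I : choiceType) (s : seq I) (p : pred I) (E : I -> set T) :
  uniq s -> (forall i, measurable (E i)) ->
  (forall i j, i != j -> E i `&` E j = set0) ->
  mu (\big[setU/set0]_(i <- s | p i) E i) = (\sum_(i <- s | p i) mu (E i))%E.
Proof.
move=> + mE disjE; elim: s => [|i s IH] /=; first by rewrite !big_nil measure0.
move=> /andP[nis us]; rewrite !big_cons; case: (p i); last exact: IH.
rewrite measureU //; first by rewrite -(IH us).
  by apply: bigsetU_measurable => j _; exact: mE.
rewrite -bigcup_seq_cond; apply/seteqP; split => // w [Eiw [j /= /andP[js _] Ejw]].
have /disjE : i != j by apply: contraNneq nis => ->.
by move/seteqP => [sub _]; exact: sub w (conj Eiw Ejw).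
Qed.

End finite_unions.

Lemma powRK (R : realType) (p x : R) : p != 0 -> 0 <= x -> (x `^ p) `^ p^-1 = x.
Proof. by move=> p0 x0; rewrite -powRrM mulfV // powRr1. Qed.

Lemma prode_le_expn (R : realType) (n : nat) (f : 'I_n -> \bar R) (c : R) :
  (forall i, 0 <= f i <= c%:E)%E -> (\prod_(i < n) f i <= (c ^+ n)%:E)%E.
Proof.
move=> f0c; have -> : (c ^+ n)%:E = (\prod_(i < n) c%:E)%E.
  by rewrite prodEFin prodr_const card_ord.
suff /andP[] : (0 <= \prod_(i < n) f i <= \prod_(i < n) c%:E)%E by [].
elim/big_ind2 : _ => [|x1 x2 y1 y2 /andP[x10 x12] /andP[y10 y12]|i _ //].
  by rewrite lee01 lexx.
by rewrite mule_ge0 //= lee_pmul.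
Qed.

Section independent_uniforms.
Variables (dsp : measure_display) (T : measurableType dsp) (R : realType)
  (P : probability T R) (n : nat) (U : 'I_n -> {RV P >-> R}).
Hypothesis U_unif : forall i, uniform01 (U i).
Hypothesis U_indep : mutually_independent U.
Local Notation unif := (uniform_prob (@ltr01 R)).

Definition box (A : 'I_n -> set R) := [set w | forall i, A i (U i w)].

Lemma box_bigcap (A : 'I_n -> set R) :
  box A = \bigcap_(i in [set j | j \in [set: 'I_n]%SET]) (U i @^-1` A i).
Proof.
apply/seteqP; split => w /= h i; first by move=> _; exact: h.
by apply: h; rewrite /= inE.
Qed.

Lemma measurable_box (A : 'I_n -> set R) :
  (forall i, measurable (A i)) -> measurable (box A).
Proof.
move=> mA; rewrite box_bigcap; apply: fin_bigcap_measurable => [|i _].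
  exact: finite_finset.
exact: measurable_funPTI.
Qed.

Lemma prob_box (A : 'I_n -> set R) : (forall i, measurable (A i)) ->
  P (box A) = (\prod_(i < n) unif (A i))%E.
Proof.
move=> mA; rewrite box_bigcap U_indep //.
by under eq_bigl do rewrite inE; apply: eq_bigr => i _; exact: U_unif.
Qed.

Lemma prob_box_le (A : 'I_n -> set R) (c : R) : (forall i, measurable (A i)) ->
  (forall i, unif (A i) <= c%:E)%E -> (P (box A) <= (c ^+ n)%:E)%E.
Proof.
move=> mA Ac; rewrite prob_box //; apply: prode_le_expn => i.
by rewrite measure_ge0 Ac.
Qed.

Lemma prob_box_cst (A : 'I_n -> set R) (c : R) : (forall i, measurable (A i)) ->
  (forall i, unif (A i) = c%:E) -> P (box A) = (c ^+ n)%:E.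
Proof.
by move=> mA Ac; rewrite prob_box // (eq_bigr _ (fun i _ => Ac i)) prodEFin prodr_const card_ord.
Qed.

(* Excluding U_i = 1, a null event, puts every coordinate into one of the N
   half-open grid intervals of [0, 1). *)
Definition box01 := box (fun=> `[0, 1[%classic).

Lemma measurable_box01 : measurable box01.
Proof. by apply: measurable_box => i; exact: measurable_itv. Qed.

Lemma prob_not_box01 : P (~` box01) = 0%E.
Proof.
have box01_1 : P box01 = 1%E.
  rewrite (@prob_box_cst _ 1) ?expr1n // => i.
  rewrite uniform01_prob_sub01 ?lebesgue_measure_itv_co ?subr0 //.
  by move=> x /=; rewrite !in_itv /= => /andP[-> /ltW].
by rewrite probability_setC ?box01_1 ?subee //; exact: measurable_box01.
Qed.

Lemma le_prob_box01 (A B : set T) : measurable A -> measurable B ->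
  A `&` box01 `<=` B -> (P A <= P B)%E.
Proof.
move=> mA mB AB; have mC := measurableC measurable_box01.
rewrite -(measureU0 mB mC prob_not_box01); apply: le_measure; rewrite ?inE //.
  exact: measurableU.
by move=> w Aw; have [/(conj Aw)/AB|] := pselect (box01 w); [left | right].
Qed.

Section power_sum.
Variables (q : R) (q_ge1 : 1 <= q).

Let q_gt0 : 0 < q. Proof. exact: lt_le_trans ltr01 q_ge1. Qed.

Definition powsum (w : T) := \sum_(i < n) (U i w) `^ q.

Lemma measurable_powsum : measurable_fun setT powsum.
Proof.
apply: (@measurable_sum _ _ _ _ _ _ (fun i w => (U i w) `^ q)) => i.
exact: measurableT_comp (measurable_powR q) (measurable_funPT (U i)).
Qed.

Lemma measurable_powsum_preimage (B : set R) :
  measurable B -> measurable (powsum @^-1` B).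
Proof. by move=> mB; rewrite -[_ @^-1` _]setTI; exact: measurable_powsum. Qed.

Lemma measurable_powsum_le (b : R) : measurable [set w | powsum w <= b].
Proof.
rewrite (_ : [set w | _] = powsum @^-1` `]-oo, b]).
  exact: measurable_powsum_preimage.
by apply/seteqP; split => w; rewrite /= in_itv.
Qed.

Lemma measurable_powsum_lt (a : R) : measurable [set w | powsum w < a].
Proof.
rewrite (_ : [set w | _] = powsum @^-1` `]-oo, a[).
  exact: measurable_powsum_preimage.
by apply/seteqP; split => w; rewrite /= in_itv.
Qed.

Lemma measurable_powsum_itv (a b : R) : measurable [set w | a <= powsum w <= b].
Proof.
rewrite (_ : [set w | _] = powsum @^-1` `[a, b]).
  exact: measurable_powsum_preimage.
by apply/seteqP; split => w; rewrite /= in_itv.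
Qed.

Lemma powR_le_powsum (w : T) (i : 'I_n) : (U i w) `^ q <= powsum w.
Proof.
by rewrite /powsum (bigD1 i) //= lerDl; apply: sumr_ge0 => j _; exact: powR_ge0.
Qed.

Lemma prob_powsum_le (b : R) : 0 <= b ->
  (P [set w | (powsum w <= b)%R] <= (b `^ (n%:R / q))%:E)%E.
Proof.
move=> b0; set c := b `^ q^-1.
have mc : forall i : 'I_n, measurable (`[0, c]%classic : set R).
  by move=> _; exact: measurable_itv.
have cover : [set w | powsum w <= b] `&` box01 `<=` box (fun=> `[0, c]%classic).
  move=> w [/= Sw w01] i; have /andP[Ui0 _] : 0 <= U i w < 1.
    by have := w01 i; rewrite /= in_itv.
  rewrite /= in_itv /= Ui0 /= /c -[U i w](powRK (lt0r_neq0 q_gt0) Ui0).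
  apply: ge0_ler_powR; rewrite ?nnegrE ?invr_ge0 ?powR_ge0 ?(ltW q_gt0) //.
  exact: le_trans (powR_le_powsum w i) Sw.
apply: le_trans (le_prob_box01 (measurable_powsum_le b) (measurable_box mc) cover) _.
apply: le_trans (prob_box_le (c := c) mc _) _ => [i|].
  apply: le_trans (uniform01_prob_le _ _ (@subIsetl _ _ _)) _; rewrite ?mc //.
  by rewrite lebesgue_measure_itv_cc ?subr0 ?powR_ge0.
by rewrite lee_fin /c -powR_mulrn ?powR_ge0 // -powRrM mulrC.
Qed.

Lemma prob_powsum_le_split (a b : R) : a <= b ->
  P [set w | (powsum w <= b)%R] =
  (P [set w | (powsum w < a)%R] + P [set w | (a <= powsum w <= b)%R])%E.
Proof.
move=> ab; have mlt := measurable_powsum_lt a; have mitv := measurable_powsum_itv a b.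
rewrite -measureU //.
  congr (P _); apply/seteqP; split => w /=.
    by case: (ltP (powsum w) a) => [|aS] Sb; [left | right; apply/andP].
  by case => [/ltW/le_trans/(_ ab) | /andP[]].
by apply/seteqP; split => // w /= [+ /andP[+ _]]; rewrite ltNge => /negP.
Qed.

Section grid.
Variables (N : nat) (a b : R).
Hypotheses (n_gt0 : (0 < n)%N) (N_gt0 : (0 < N)%N) (a_gt0 : 0 < a) (a_le_b : a <= b).

Let b_gt0 : 0 < b. Proof. exact: lt_le_trans a_gt0 a_le_b. Qed.

Definition mesh : R := N%:R^-1.
Definition scale : R := (a / b) `^ q^-1.

Let mesh_gt0 : 0 < mesh. Proof. by rewrite invr_gt0 ltr0n. Qed.
Let scale_gt0 : 0 < scale. Proof. by rewrite powR_gt0 // divr_gt0. Qed.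

Let scale_le1 : scale <= 1.
Proof.
rewrite /scale (_ : 1 = 1 `^ q^-1); last by rewrite powR1.
apply: ge0_ler_powR; rewrite ?nnegrE ?invr_ge0 ?ler01 ?(ltW q_gt0) //.
  by rewrite divr_ge0 // ltW.
by rewrite ler_pdivrMr // mul1r.
Qed.

Lemma scale_powR : scale `^ q = a / b.
Proof. by rewrite /scale -powRrM mulVf ?lt0r_neq0 // powRr1 // divr_ge0 // ltW. Qed.

(* A grid point k indexes two boxes of side mesh before scaling: [cell k] has
   lower corner (k+1) mesh, so it meets {S <= b} only for k in [grid_under];
   [scaled_cell k] is the box with upper corner (k+1) mesh scaled by [scale],
   which lies in {S < a} for k in [grid_under]. The cells cover [0,1)^n outside
   [near_axes]. *)
Definition grid_under := [set k : {ffun 'I_n -> 'I_N} |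
  \sum_(i < n) ((k i).+1%:R * mesh) `^ q <= b]%SET.

Definition cell (k : {ffun 'I_n -> 'I_N}) :=
  box (fun i => `[(k i).+1%:R * mesh, (k i).+2%:R * mesh[%classic).

Definition scaled_cell (k : {ffun 'I_n -> 'I_N}) :=
  box (fun i => `[scale * ((k i)%:R * mesh), scale * ((k i).+1%:R * mesh)[%classic).

Definition near_axes :=
  \big[setU/set0]_(i <- index_enum 'I_n) (U i @^-1` `]-oo, mesh[%classic).

Let measurable_itv_co (x y : R) : measurable (`[x, y[%classic : set R).
Proof. exact: measurable_itv. Qed.

Lemma measurable_cell k : measurable (cell k).
Proof. exact: measurable_box. Qed.

Lemma measurable_scaled_cell k : measurable (scaled_cell k).
Proof. exact: measurable_box. Qed.

Lemma measurable_near_axes : measurable near_axes.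
Proof.
by apply: bigsetU_measurable => i _; apply: measurable_funPTI; exact: measurable_itv.
Qed.

Lemma mesh_cell_index (x : R) : mesh <= x < 1 ->
  exists j : 'I_N, j.+1%:R * mesh <= x < j.+2%:R * mesh.
Proof.
case/andP=> mesh_le x_lt1; have xN_ge0 : 0 <= x * N%:R.
  by rewrite mulr_ge0 ?ler0n // (le_trans _ mesh_le) // ltW.
pose t := Num.truncn (x * N%:R).
have t_gt0 : (0 < t)%N by rewrite truncn_gt0 -ler_pdivrMr ?ltr0n // div1r.
have t_ltN : (t < N)%N.
  by rewrite truncn_lt_nat // -[X in _ < X]mul1r ltr_pM2r ?ltr0n.
exists (Ordinal (leq_ltn_trans (leq_pred t) t_ltN)); rewrite /= prednK //.
rewrite /mesh -!/(_ / _) ler_pdivrMr ?ltr0n // ltr_pdivlMr ?ltr0n //.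
exact: truncn_itv.
Qed.

Lemma powsum_le_cover : [set w | powsum w <= b] `&` box01 `<=`
  near_axes `|` \big[setU/set0]_(k <- index_enum _ | k \in grid_under) cell k.
Proof.
move=> w [/= Sw w01].
have [[i Ui]|far] := pselect (exists i, U i w < mesh).
  left; rewrite /near_axes -bigcup_seq; exists i; first exact: mem_index_enum.
  by rewrite /= in_itv /= Ui.
have U01 i : 0 <= U i w < 1 by have := w01 i; rewrite /= in_itv.
have w_cell i : exists j : 'I_N, j.+1%:R * mesh <= U i w < j.+2%:R * mesh.
  apply: mesh_cell_index; have /andP[_ ->] := U01 i; rewrite andbT leNgt.
  by apply/negP => Ui; apply: far; exists i.
have [k k_cell] := fin_all_exists w_cell.
right; rewrite -bigcup_seq_cond; exists (finfun k).
  rewrite /= mem_index_enum inE; apply: le_trans Sw.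
  apply: ler_sum => i _; rewrite ffunE; apply: ge0_ler_powR.
  - exact: ltW.
  - by rewrite nnegrE mulr_ge0 // ltW.
  - by have /andP[] := U01 i.
  - by have /andP[] := k_cell i.
by move=> i /=; rewrite ffunE in_itv /= k_cell.
Qed.

Lemma prob_near_axes : (P near_axes <= (n%:R * mesh)%:E)%E.
Proof.
apply: le_trans (measure_bigsetU_le _ _ _ _) _ => [i|].
  by apply: measurable_funPTI; exact: measurable_itv.
apply: (@le_trans _ _ (\sum_(i < n) mesh%:E)%E); last first.
  by rewrite sumEFin sumr_const card_ord mulr_natl.
(* refold the content coercion of P, on which [U_unif] cannot rewrite *)
apply: lee_sum => i _; rewrite -[X in (X <= _)%E]/(P _) U_unif; last first.
  exact: measurable_itv.
apply: le_trans (uniform01_prob_le (B := `[0, mesh]%classic) _ _ _) _.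
- exact: measurable_itv.
- exact: measurable_itv.
- by move=> x [] /=; rewrite !in_itv /= => /ltW -> /andP[-> _].
- by rewrite lebesgue_measure_itv_cc ?subr0 // ltW.
Qed.

Lemma prob_cell k : (P (cell k) <= (mesh ^+ n)%:E)%E.
Proof.
apply: prob_box_le => // i.
apply: le_trans (uniform01_prob_le _ _ (@subIsetl _ _ _)) _ => //.
rewrite lebesgue_measure_itv_co -?mulrBl -?natrB // ?subSnn ?mul1r //.
by rewrite ler_pM2r // ler_nat.
Qed.

Lemma prob_powsum_le_grid : (P [set w | (powsum w <= b)%R] <=
  (n%:R * mesh + #|grid_under|%:R * mesh ^+ n)%:E)%E.
Proof.
have mcells : measurable (\big[setU/set0]_(k <- index_enum _ | k \in grid_under) cell k).
  by apply: bigsetU_measurable => k _; exact: measurable_cell.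
apply: le_trans (le_prob_box01 (measurable_powsum_le b) _ powsum_le_cover) _.
  exact: measurableU measurable_near_axes mcells.
apply: le_trans (measureU2 _ measurable_near_axes mcells) _; rewrite EFinD.
apply: leeD; first exact: prob_near_axes.
apply: le_trans (measure_bigsetU_le _ _ _ measurable_cell) _.
apply: (@le_trans _ _ (\sum_(k <- index_enum _ | k \in grid_under) (mesh ^+ n)%:E)%E).
  by apply: lee_sum => k _; exact: prob_cell.
by rewrite sumEFin sumr_const mulr_natl.
Qed.

Lemma scaled_cell_sub (k : {ffun 'I_n -> 'I_N}) :
  k \in grid_under -> scaled_cell k `<=` [set w | powsum w < a].
Proof.
rewrite inE => k_under w /= w_k.
have powR_lt i : (U i w) `^ q < a / b * ((k i).+1%:R * mesh) `^ q.
  have /andP[lo hi] : scale * ((k i)%:R * mesh) <= U i w < scale * ((k i).+1%:R * mesh).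
    by have := w_k i; rewrite /= in_itv.
  have Ui0 : 0 <= U i w by apply: le_trans lo; rewrite !mulr_ge0 // ltW.
  rewrite -scale_powR -powRM ?(ltW scale_gt0) ?mulr_ge0 ?(ltW mesh_gt0) //.
  by apply: gt0_ltr_powR; rewrite ?nnegrE // ?mulr_ge0 // ltW.
apply: lt_le_trans (ltr_sum _ (fun i _ => powR_lt i)) _.
  by apply/hasP; exists (Ordinal n_gt0); rewrite ?mem_index_enum.
rewrite -mulr_sumr; apply: le_trans (ler_wpM2l _ k_under) _.
  by rewrite divr_ge0 // ltW.
by rewrite divfK // lt0r_neq0.
Qed.

Lemma scaled_cell_disjoint (k k' : {ffun 'I_n -> 'I_N}) :
  k != k' -> scaled_cell k `&` scaled_cell k' = set0.
Proof.
move=> kk'; have /existsP[i ki] : [exists i, k i != k' i].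
  rewrite -negb_forall; apply: contra kk' => /forallP k_eq.
  by apply/eqP/ffunP => i; exact/eqP/k_eq.
apply/seteqP; split => // w [/(_ i) + /(_ i)]; rewrite /= !in_itv /=.
move=> /andP[lo hi] /andP[lo' hi'].
have lt_succ (j j' : 'I_N) : scale * (j%:R * mesh) < scale * (j'.+1%:R * mesh) ->
    (j < j'.+1)%N.
  by rewrite ltr_pM2l // ltr_pM2r // ltr_nat.
apply/(negP ki)/eqP/val_inj/anti_leq/andP; rewrite -ltnS -[(k' i <= _)%N]ltnS.
by split; apply: lt_succ; [exact: le_lt_trans lo hi' | exact: le_lt_trans lo' hi].
Qed.

Lemma prob_scaled_cell k : P (scaled_cell k) = ((scale * mesh) ^+ n)%:E.
Proof.
apply: prob_box_cst => // i; rewrite uniform01_prob_sub01 //.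
  rewrite lebesgue_measure_itv_co -?mulrBr -?mulrBl -?natrB ?subSnn ?mul1r //.
  by rewrite ler_pM2l // ler_pM2r // ler_nat.
move=> x /=; rewrite !in_itv /= => /andP[lo hi]; apply/andP; split.
  by apply: le_trans lo; rewrite !mulr_ge0 // ltW.
apply: le_trans (ltW hi) _; rewrite -[leRHS]mul1r.
apply: ler_pM; rewrite ?mulr_ge0 ?(ltW scale_gt0) ?(ltW mesh_gt0) //.
by rewrite /mesh -/(_ / _) ler_pdivrMr ?ltr0n // mul1r ler_nat.
Qed.

Lemma prob_powsum_lt_grid : ((#|grid_under|%:R * (scale * mesh) ^+ n)%:E <=
  P [set w | (powsum w < a)%R])%E.
Proof.
have mcells :
    measurable (\big[setU/set0]_(k <- index_enum _ | k \in grid_under) scaled_cell k).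
  by apply: bigsetU_measurable => k _; exact: measurable_scaled_cell.
have cells_sub : \big[setU/set0]_(k <- index_enum _ | k \in grid_under) scaled_cell k
    `<=` [set w | powsum w < a].
  by rewrite -bigcup_seq_cond => w [k /= /andP[_ k_under]]; exact: scaled_cell_sub.
apply: le_trans (le_measure P (mem_set mcells) (mem_set (measurable_powsum_lt a)) cells_sub).
rewrite measure_bigsetU_uniq ?index_enum_uniq //; last first.
  exact: scaled_cell_disjoint.
  exact: measurable_scaled_cell.
rewrite (eq_bigr _ (fun k _ => prob_scaled_cell k)).
by rewrite sumEFin sumr_const mulr_natl.
Qed.

Lemma scale_expn_mul_powR : scale ^+ n * b `^ (n%:R / q) = a `^ (n%:R / q).
Proof.
rewrite /scale -powR_mulrn ?powR_ge0 // -powRrM [q^-1 * _]mulrC -powRM.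
- by rewrite divfK // lt0r_neq0.
- by rewrite divr_ge0 // ltW.
- exact: ltW.
Qed.

Lemma prob_powsum_itv_le_grid : (P [set w | (a <= powsum w <= b)%R] <=
  (b `^ (n%:R / q) - a `^ (n%:R / q) + n%:R * mesh)%:E)%E.
Proof.
have fin_P (X : set T) : measurable X -> P X = (fine (P X))%:E.
  by move=> mX; rewrite fineK // fin_num_measure.
set pb := fine (P [set w | (powsum w <= b)%R]).
set pa := fine (P [set w | (powsum w < a)%R]).
set pab := fine (P [set w | (a <= powsum w <= b)%R]).
rewrite (fin_P _ (measurable_powsum_itv a b)) lee_fin -/pab.
have := prob_powsum_le_split a_le_b; have := prob_powsum_le (ltW b_gt0).
have := prob_powsum_le_grid; have := prob_powsum_lt_grid.
rewrite (fin_P _ (measurable_powsum_le b)) (fin_P _ (measurable_powsum_lt a)).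
rewrite (fin_P _ (measurable_powsum_itv a b)) -EFinD !lee_fin -/pa -/pb -/pab.
set M := #|grid_under|%:R; set L := scale ^+ n.
rewrite exprMn mulrCA -/L -scale_expn_mul_powR -/L => pa_ge pb_le pb_le_br [pb_split].
have L_ge0 : 0 <= L by rewrite exprn_ge0 // ltW.
have L_le1 : L <= 1 by rewrite exprn_ile1 // ltW.
have err_ge0 : 0 <= n%:R * mesh by rewrite mulr_ge0 // ltW.
have := ler_wpM2l L_ge0 pb_le; have := ler_piMl err_ge0 L_le1.
have : (1 - L) * pb <= (1 - L) * b `^ (n%:R / q) by rewrite ler_wpM2l ?subr_ge0.
lra.
Qed.

End grid.

End power_sum.

End independent_uniforms.

Theorem lemma5p4 (dsp : measure_display) (T : measurableType dsp)
  (R : realType) (P : probability T R) (d : nat) (hd : (2 <= d)%N)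
  (U : 'I_d.-1 -> {RV P >-> R})
  (hunif : forall i, uniform01 (U i))
  (hind : mutually_independent U)
  (q : R) (hq : 1 <= q) (a b : R) (ha : 0 <= a) (hab : a <= b) :
  (P [set w | (a <= \sum_(i < d.-1) (U i w) `^ q <= b)%R]
   <= ((b `^ (d.-1%:R / q) - a `^ (d.-1%:R / q))%R)%:E)%E.
Proof.
have n_gt0 : (0 < d.-1)%N by rewrite -ltnS prednK // ltnW.
have [a0|a_gt0] := eqVneq a 0.
  (* the scaled cells degenerate for a = 0 *)
  have r_neq0 : d.-1%:R / q != 0.
    by rewrite mulf_neq0 ?invr_eq0 ?pnatr_eq0 -?lt0n // lt0r_neq0 // (lt_le_trans ltr01).
  rewrite a0 powR0 // subr0; apply: le_trans (prob_powsum_le hunif hind hq (le_trans ha hab)).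
  apply: le_measure; rewrite ?inE; [exact: measurable_powsum_itv|exact: measurable_powsum_le|].
  by move=> w /= /andP[].
apply/lee_addgt0Pr => e e_gt0.
pose N := (Num.truncn (d.-1%:R / e)).+1.
have N_gt0 : (0 < N)%N by [].
apply: le_trans (prob_powsum_itv_le_grid hunif hind hq n_gt0 N_gt0 _ hab) _.
  by rewrite lt0r a_gt0.
rewrite -EFinD lee_fin lerD2l /mesh -/(_ / _) ler_pdivrMr ?ltr0n // mulrC.
by rewrite -ler_pdivrMr // ltW // truncnS_gt.
Qed.
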